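(* Under the standing assumptions below, let $\kappa>0$, $\tau\ge L_{\nabla P_\rho}+\kappa$, $\alpha_y\in(0,1/(L_{\nabla P_\rho}+\tau))$, $\alpha_x\in(0,1/L_{\nabla\vartheta})$, and let the iterates be generated by PG-MAD. Then for $k=0,\dots,K-1$, with $w^k=(x^k,z^k,u^k,v^k)$, $$\frac{1-\alpha_xL_{\nabla\vartheta}}{4\alpha_x}\|w^{k+1}-w^k\|^2\le\vartheta(w^k)-\vartheta(w^{k+1})+\frac{2\alpha_x(L_{\nabla f}^2+\rho^2L_{\nabla g}^2+\tau^2)}{\kappa(1-\alpha_xL_{\nabla\vartheta})}(1-\kappa\alpha_y)^T\Delta_k.$$
   Context: Standing setting. $\mathcal X\subset\mathbb R^{d_x}$, $\mathcal Y\subset\mathbb R^{d_y}$, $\Lambda\subset\mathbb R^{d_\lambda}$ are nonempty convex compact sets. $f(x,y,\lambda):=\bar f(x,y)+\lambda^T(Ax+By-c)$ with $\bar f$ continuously differentiable; $L_{\nabla f}>0$ is a Lipschitz constant of $\nabla f$ on $\mathcal X\times\mathcal Y\times\Lambda$. $g$ is continuously differentiable, $\nabla g$ is $L_{\nabla g}$-Lipschitz on $\mathcal Y\times\Lambda$, $g(\cdot,\lambda)$ is convex for each $\lambda\in\Lambda$, and $g$ has a saddle point $(z^*,\lambda^* )\in\mathcal Y\times\Lambda$: $g(z^*,\lambda^* )=\max_{\lambda\in\Lambda}\min_{z\in\mathcal Y}g(z,\lambda)=\min_{z\in\mathcal Y}\max_{\lambda\in\Lambda}g(z,\lambda)$.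 For $\rho>0$: $P_\rho(x,y,\lambda,z):=f(x,y,\lambda)-\rho(g(y,\lambda)-g(z,\lambda))$, $L_{\nabla P_\rho}:=L_{\nabla f}+2\rho L_{\nabla g}$; $Q(x,z,u,v,y,\lambda):=P_\rho(x,y,\lambda,z)-\frac\tau2\|(y,\lambda)-(u,v)\|^2$; $\vartheta(x,z,u,v):=\max_{y\in\mathcal Y,\lambda\in\Lambda}Q(x,z,u,v,y,\lambda)$; $L_{\nabla\vartheta}:=(L_{\nabla f}+\rho L_{\nabla g}+2\tau)(1+(L_{\nabla P_\rho}+\tau)\kappa^{-1})$. $\mathrm{proj}_C$ is Euclidean projection; $\nabla_1g$ is the gradient of $g$ in its first argument. PG-MAD: given $\rho,\kappa>0$, $\tau\ge L_{\nabla P_\rho}+\kappa$, $\alpha_x,\alpha_y>0$, integers $T,K>1$, and $x^0\in\mathcal X$, $z^0,y^0\in\mathcal Y$, $\lambda^0\in\Lambda$, $u^0\in\mathbb R^{d_y}$, $v^0\in\mathbb R^{d_\lambda}$: for $k=0,\dots,K-1$, set $(y^{[0]}(k),\lambda^{[0]}(k))=(y^k,\lambda^k)$; for $t=0,\dots,T-1$, $y^{[t+1]}(k)=\mathrm{proj}_{\mathcal Y}[y^{[t]}(k)+\alpha_y\nabla_yQ(x^k,z^k,u^k,v^k,y^{[t]}(k),\lambda^{[t]}(k))]$, $\lambda^{[t+1]}(k)=\mathrm{proj}_{\Lambda}[\lambda^{[t]}(k)+\alpha_y\nabla_\lambda Q(x^k,z^k,u^k,v^k,y^{[t]}(k),\lambda^{[t]}(k))]$;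 set $(y^{k+1},\lambda^{k+1})=(y^{[T]}(k),\lambda^{[T]}(k))$; then $x^{k+1}=\mathrm{proj}_{\mathcal X}[x^k-\alpha_x\nabla_xf(x^k,y^{k+1},\lambda^{k+1})]$, $z^{k+1}=\mathrm{proj}_{\mathcal Y}[z^k-\alpha_x\rho\nabla_1g(z^k,\lambda^{k+1})]$, $u^{k+1}=(1+\alpha_x\tau)u^k-\alpha_x\tau y^{k+1}$, $v^{k+1}=(1+\alpha_x\tau)v^k-\alpha_x\tau\lambda^{k+1}$. Notation: $Q^{(k)}(y,\lambda):=Q(x^k,z^k,u^k,v^k,y,\lambda)$; $\Delta_k:=\vartheta(x^k,z^k,u^k,v^k)-Q^{(k)}(y^k,\lambda^k)$. *)

From HB Require Import structures.
From mathcomp Require Import all_boot all_order all_algebra.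
From mathcomp Require Import all_classical all_reals all_analysis.
Set Implicit Arguments. Unset Strict Implicit. Unset Printing Implicit Defensive.
Import Order.TTheory GRing.Theory Num.Theory.
Import numFieldNormedType.Exports.
Local Open Scope classical_set_scope.
Local Open Scope ring_scope.

Section Defs.
Variable R : realType.

Definition dotv n (u v : 'rV[R]_n) : R := \sum_(i < n) u ord0 i * v ord0 i.
Definition sqn n (u : 'rV[R]_n) : R := dotv u u.
Definition enorm n (u : 'rV[R]_n) : R := Num.sqrt (sqn u).

Definition enorm2 m n (a : 'rV[R]_m) (b : 'rV[R]_n) : R := Num.sqrt (sqn a + sqn b).
Definition enorm3 m n p (a : 'rV[R]_m) (b : 'rV[R]_n) (c : 'rV[R]_p) : R :=
  Num.sqrt (sqn a + sqn b + sqn c).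

Definition is_proj n (C : set 'rV[R]_n) (a p : 'rV[R]_n) : Prop :=
  C p /\ forall q, C q -> enorm (a - p) <= enorm (a - q).

Definition is_C1_grad m n (F : 'rV[R]_m -> 'rV[R]_n -> R)
    (G1 : 'rV[R]_m -> 'rV[R]_n -> 'rV[R]_m) (G2 : 'rV[R]_m -> 'rV[R]_n -> 'rV[R]_n) : Prop :=
  (forall a b,
    differentiable (fun p : 'rV[R]_m * 'rV[R]_n => F p.1 p.2) (a, b) /\
    forall h : 'rV[R]_m * 'rV[R]_n,
      'd (fun p : 'rV[R]_m * 'rV[R]_n => F p.1 p.2) (a, b) h
        = dotv (G1 a b) h.1 + dotv (G2 a b) h.2) /\
  continuous (fun p : 'rV[R]_m * 'rV[R]_n => G1 p.1 p.2) /\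
  continuous (fun p : 'rV[R]_m * 'rV[R]_n => G2 p.1 p.2).

End Defs.

(* Problem data. A : 'M_(dl,dx), B : 'M_(dl,dy), c : R^dl (row vector).
   The column-vector expression A x is written x *m A^T. *)
Unset Implicit Arguments.
Record pdata (R : realType) := PData {
  dx : nat; dy : nat; dl : nat;
  Xs : set 'rV[R]_dx; Ys : set 'rV[R]_dy; Ls : set 'rV[R]_dl;
  Am : 'M[R]_(dl, dx); Bm : 'M[R]_(dl, dy); cv : 'rV[R]_dl;
  fbar : 'rV[R]_dx -> 'rV[R]_dy -> R;
  fbar_x : 'rV[R]_dx -> 'rV[R]_dy -> 'rV[R]_dx;
  fbar_y : 'rV[R]_dx -> 'rV[R]_dy -> 'rV[R]_dy;
  gfun : 'rV[R]_dy -> 'rV[R]_dl -> R;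
  g_1 : 'rV[R]_dy -> 'rV[R]_dl -> 'rV[R]_dy;
  g_2 : 'rV[R]_dy -> 'rV[R]_dl -> 'rV[R]_dl
}.
Arguments dx {R}. Arguments dy {R}. Arguments dl {R}. Arguments Xs {R}. Arguments Ys {R}. Arguments Ls {R}.
Arguments Am {R}. Arguments Bm {R}. Arguments cv {R}. Arguments fbar {R}. Arguments fbar_x {R}.
Arguments fbar_y {R}. Arguments gfun {R}. Arguments g_1 {R}. Arguments g_2 {R}.
Set Implicit Arguments.

Section Problem.
Variables (R : realType) (D : pdata R) (rho tau : R).
Local Notation dx := (dx D). Local Notation dy := (dy D). Local Notation dl := (dl D).

Definition fval (x : 'rV[R]_dx) (y : 'rV[R]_dy) (l : 'rV[R]_dl) : R :=
  fbar D x y + dotv l (x *m (Am D)^T + y *m (Bm D)^T - cv D).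
Definition grad_fx x y (l : 'rV[R]_dl) : 'rV[R]_dx := fbar_x D x y + l *m Am D.
Definition grad_fy x y (l : 'rV[R]_dl) : 'rV[R]_dy := fbar_y D x y + l *m Bm D.
Definition grad_fl (x : 'rV[R]_dx) (y : 'rV[R]_dy) (l : 'rV[R]_dl) : 'rV[R]_dl :=
  x *m (Am D)^T + y *m (Bm D)^T - cv D.

Definition Prho x y l (z : 'rV[R]_dy) : R := fval x y l - rho * (gfun D y l - gfun D z l).

Definition Qfun x (z u : 'rV[R]_dy) (v : 'rV[R]_dl) y l : R :=
  Prho x y l z - tau / 2 * (sqn (y - u) + sqn (l - v)).
Definition grad_Qy x (z u : 'rV[R]_dy) (v : 'rV[R]_dl) y l : 'rV[R]_dy :=
  grad_fy x y l - rho *: g_1 D y l - tau *: (y - u).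
Definition grad_Ql x (z u : 'rV[R]_dy) (v : 'rV[R]_dl) y l : 'rV[R]_dl :=
  grad_fl x y l - rho *: (g_2 D y l - g_2 D z l) - tau *: (l - v).

Definition vartheta x (z u : 'rV[R]_dy) (v : 'rV[R]_dl) : R :=
  sup [set Qfun x z u v p.1 p.2 | p in Ys D `*` Ls D].

End Problem.
Arguments fval {R} D. Arguments grad_fx {R} D. Arguments grad_fy {R} D.
Arguments grad_fl {R} D. Arguments Prho {R} D. Arguments Qfun {R} D.
Arguments grad_Qy {R} D. Arguments grad_Ql {R} D. Arguments vartheta {R} D.

From HB Require Import structures.
From mathcomp Require Import all_boot all_order all_algebra.
From mathcomp Require Import all_classical all_reals all_analysis.
From mathcomp Require Import ring lra.
Import Order.TTheory GRing.Theory Num.Theory.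
Import numFieldNormedType.Exports.
Local Open Scope classical_set_scope.
Local Open Scope ring_scope.

(* For fixed w = (x, z, u, v), Q(w, .) is kappa-strongly concave and (L_P + tau)-smooth on
   Y x Lambda because tau >= L_P + kappa.  Hence the T projected gradient ascent steps of the
   inner loop shrink the gap vartheta(w) - Q(w, .) by the factor (1 - kappa alpha_y)^T, and
   Q(w, .) decays quadratically away from every near-maximizer.  The outer step is a projected
   gradient step in w on Q(., y^{k+1}, lambda^{k+1}).  Compare Q(w^{k+1}, q) with its first-order
   model at w^k, for q a near-maximizer of Q(w^{k+1}, .); the change of the w-gradient of Q
   between (y^{k+1}, lambda^{k+1}), a near-maximizer p of Q(w^k, .) and q is paid for by the
   quadratic decay around p.  This yields the descent of vartheta up to the inner-loop error,
   without ever using an attained maximum. *)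

Section DotProduct.
Context {R : realType}.

Lemma dotvC {n} (a b : 'rV[R]_n) : dotv a b = dotv b a.
Proof. by apply: eq_bigr => i _; rewrite mulrC. Qed.

Lemma dotvDl {n} (a b c : 'rV[R]_n) : dotv (a + b) c = dotv a c + dotv b c.
Proof. by rewrite /dotv -big_split; apply: eq_bigr => i _; rewrite !mxE mulrDl. Qed.

Lemma dotvDr {n} (a b c : 'rV[R]_n) : dotv c (a + b) = dotv c a + dotv c b.
Proof. by rewrite dotvC dotvDl !(dotvC c). Qed.

Lemma dotvZl {n} t (a b : 'rV[R]_n) : dotv (t *: a) b = t * dotv a b.
Proof. by rewrite /dotv mulr_sumr; apply: eq_bigr => i _; rewrite !mxE mulrA. Qed.

Lemma dotvZr {n} t (a b : 'rV[R]_n) : dotv b (t *: a) = t * dotv b a.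
Proof. by rewrite dotvC dotvZl dotvC. Qed.

Lemma dotvNl {n} (a b : 'rV[R]_n) : dotv (- a) b = - dotv a b.
Proof. by rewrite -scaleN1r dotvZl mulN1r. Qed.

Lemma dotvNr {n} (a b : 'rV[R]_n) : dotv b (- a) = - dotv b a.
Proof. by rewrite dotvC dotvNl dotvC. Qed.

Lemma dotvBl {n} (a b c : 'rV[R]_n) : dotv (a - b) c = dotv a c - dotv b c.
Proof. by rewrite dotvDl dotvNl. Qed.

Lemma dotvBr {n} (a b c : 'rV[R]_n) : dotv c (a - b) = dotv c a - dotv c b.
Proof. by rewrite dotvDr dotvNr. Qed.

Lemma dotv0l {n} (a : 'rV[R]_n) : dotv 0 a = 0.
Proof. by rewrite /dotv big1 // => i _; rewrite mxE mul0r. Qed.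

Lemma dotv0r {n} (a : 'rV[R]_n) : dotv a 0 = 0.
Proof. by rewrite dotvC dotv0l. Qed.

Lemma dotv_mulmx_tr {m n} (l : 'rV[R]_m) (x : 'rV[R]_n) (A : 'M[R]_(m, n)) :
  dotv l (x *m A^T) = dotv (l *m A) x.
Proof.
rewrite /dotv; under eq_bigr do rewrite !mxE big_distrr /=.
rewrite exchange_big /=; apply: eq_bigr => j _; rewrite !mxE big_distrl /=.
by apply: eq_bigr => i _; rewrite !mxE; ring.
Qed.

Lemma dotv_row_mx {m n} (a c : 'rV[R]_m) (b d : 'rV[R]_n) :
  dotv (row_mx a b) (row_mx c d) = dotv a c + dotv b d.
Proof.
by rewrite /dotv big_split_ord /=; congr (_ + _); apply: eq_bigr => i _;
  rewrite ?row_mxEl ?row_mxEr.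
Qed.

Lemma sqn_ge0 {n} (a : 'rV[R]_n) : 0 <= sqn a.
Proof. by apply: sumr_ge0 => i _; rewrite -expr2 sqr_ge0. Qed.

Lemma sqn0 n : sqn (0 : 'rV[R]_n) = 0.
Proof. exact: dotv0l. Qed.

Lemma sqn_eq0 {n} (a : 'rV[R]_n) : sqn a = 0 -> a = 0.
Proof.
move=> a0; apply/rowP => i; rewrite mxE.
have := @psumr_eq0P R _ predT (fun j => a ord0 j * a ord0 j).
move=> /(_ (fun j _ => ltac:(by rewrite -expr2 sqr_ge0))) /(_ a0 i isT).
by move/eqP; rewrite mulf_eq0 orbb => /eqP.
Qed.

Lemma sqnD {n} (a b : 'rV[R]_n) : sqn (a + b) = sqn a + 2 * dotv a b + sqn b.
Proof. rewrite /sqn !dotvDl !dotvDr (dotvC b a); ring. Qed.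

Lemma sqnB {n} (a b : 'rV[R]_n) : sqn (a - b) = sqn a - 2 * dotv a b + sqn b.
Proof. rewrite /sqn !dotvBl !dotvBr (dotvC b a); ring. Qed.

Lemma sqnZ {n} t (a : 'rV[R]_n) : sqn (t *: a) = t ^+ 2 * sqn a.
Proof. rewrite /sqn dotvZl dotvZr; ring. Qed.

Lemma sqnN {n} (a : 'rV[R]_n) : sqn (- a) = sqn a.
Proof. by rewrite /sqn dotvNl dotvNr opprK. Qed.

Lemma sqn_subC {n} (a b : 'rV[R]_n) : sqn (a - b) = sqn (b - a).
Proof. by rewrite -sqnN opprB. Qed.

Lemma sqn_row_mx {m n} (a : 'rV[R]_m) (b : 'rV[R]_n) : sqn (row_mx a b) = sqn a + sqn b.
Proof. exact: dotv_row_mx. Qed.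

Lemma young_dotv {n} (a b : 'rV[R]_n) {c : R} : 0 < c -> 2 * dotv a b <= c * sqn a + sqn b / c.
Proof.
move=> c0; have := sqn_ge0 (c *: a - b); rewrite sqnB sqnZ dotvZl => h.
have -> : c * sqn a + sqn b / c = (c ^+ 2 * sqn a + sqn b) / c by field; rewrite gt_eqF.
by rewrite ler_pdivlMr //; lra.
Qed.

Lemma ler_norm_dotv {n} (e d : 'rV[R]_n) M : 0 <= M -> sqn e <= M ^+ 2 * sqn d ->
  `|dotv e d| <= M * sqn d.
Proof.
have dotv_le e' : 0 <= M -> sqn e' <= M ^+ 2 * sqn d -> dotv e' d <= M * sqn d.
  rewrite le_eqVlt => /predU1P[<- | M_gt0] he'.
    have /sqn_eq0 -> : sqn e' = 0 by apply/le_anti; rewrite sqn_ge0 andbT; lra.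
    by rewrite dotv0l mul0r.
  have := sqn_ge0 (e' - M *: d); rewrite sqnB sqnZ dotvZr => h.
  by rewrite -(ler_pM2l M_gt0); nra.
move=> M0 he; rewrite ler_norml dotv_le // andbT lerNl -dotvNl dotv_le //.
by rewrite sqnN.
Qed.

Lemma sqr_le_of_sqrtr_le (a b L : R) : 0 <= a -> 0 <= b -> 0 <= L ->
  Num.sqrt a <= L * Num.sqrt b -> a <= L ^+ 2 * b.
Proof.
move=> a0 b0 L0 h.
have : Num.sqrt a ^+ 2 <= (L * Num.sqrt b) ^+ 2.
  by rewrite ler_sqr // nnegrE ?sqrtr_ge0 ?mulr_ge0 ?sqrtr_ge0.
by rewrite exprMn !sqr_sqrtr.
Qed.

Lemma enorm2_le_sqr {m n} {a a' : 'rV[R]_m} {b b' : 'rV[R]_n} {L : R} :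
  0 <= L -> enorm2 a b <= L * enorm2 a' b' -> sqn a + sqn b <= L ^+ 2 * (sqn a' + sqn b').
Proof. by move=> L0; apply: sqr_le_of_sqrtr_le => //; rewrite addr_ge0 ?sqn_ge0. Qed.

Lemma enorm3_le_sqr {m n p} {a a' : 'rV[R]_m} {b b' : 'rV[R]_n} {c c' : 'rV[R]_p} {L : R} :
  0 <= L -> enorm3 a b c <= L * enorm3 a' b' c' ->
  sqn a + sqn b + sqn c <= L ^+ 2 * (sqn a' + sqn b' + sqn c').
Proof. by move=> L0; apply: sqr_le_of_sqrtr_le => //; rewrite !addr_ge0 ?sqn_ge0. Qed.

End DotProduct.

Section Calculus.
Context {R : realType}.

Lemma is_derive_quadratic (a b c s : R) :
  is_derive s 1 (fun t : R => a + t * b + t ^+ 2 * c) (b + 2 * s * c).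
Proof.
eapply is_derive_eq; first exact (is_deriveD
  (is_deriveD (is_derive_cst a s 1) (is_deriveM (is_derive_id s 1) (is_derive_cst b s 1)))
  (is_deriveM (is_deriveX 2 (is_derive_id s 1)) (is_derive_cst c s 1))).
rewrite /= !fctE /= !scaler0 !add0r expr1.
rewrite /GRing.scale /=; ring.
Qed.

Lemma is_derive_dotv_line {k} (a b c d : 'rV[R]_k) (s : R) :
  is_derive s 1 (fun t : R => dotv (a + t *: b) (c + t *: d))
    (dotv b (c + s *: d) + dotv (a + s *: b) d).
Proof.
have -> : (fun t : R => dotv (a + t *: b) (c + t *: d)) =
    (fun t : R => dotv a c + t * (dotv a d + dotv b c) + t ^+ 2 * dotv b d).
  by apply/funext => t; rewrite !dotvDl !dotvDr !dotvZl !dotvZr; ring.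
eapply is_derive_eq; first exact: is_derive_quadratic.
by rewrite !dotvDl !dotvDr !dotvZl !dotvZr; ring.
Qed.

Lemma is_derive_line (V : normedModType R) (f : V -> R) (c d : V) (s : R) :
  differentiable f (c + s *: d) ->
  is_derive s 1 (fun t : R => f (c + t *: d)) ('d f (c + s *: d) d).
Proof.
move=> df.
have E : (fun h : R => h^-1 *: (((fun t => f (c + t *: d)) \o shift s) (h *: 1) - f (c + s *: d)))
  = (fun h => h^-1 *: ((f \o shift (c + s *: d)) (h *: d) - f (c + s *: d))).
  apply/funext => h /=; congr (_ *: (f _ - _)).
  by rewrite [h *: 1]mulr1 scalerDl addrCA.
split; first by rewrite /derivable E; exact: diff_derivable.
by rewrite /derive E; exact: deriveE.
Qed.

Definition is_line_grad {m n} (F : 'rV[R]_m -> 'rV[R]_n -> R)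
    (G1 : 'rV[R]_m -> 'rV[R]_n -> 'rV[R]_m) (G2 : 'rV[R]_m -> 'rV[R]_n -> 'rV[R]_n) :=
  forall a d b e (s : R), is_derive s 1 (fun t : R => F (a + t *: d) (b + t *: e))
    (dotv (G1 (a + s *: d) (b + s *: e)) d + dotv (G2 (a + s *: d) (b + s *: e)) e).

Lemma is_C1_grad_line {m n} {F : 'rV[R]_m -> 'rV[R]_n -> R} {G1 G2} :
  is_C1_grad F G1 G2 -> is_line_grad F G1 G2.
Proof.
move=> [hd _] a d b e s; have [dF eF] := hd (a + s *: d) (b + s *: e).
by have := @is_derive_line _ (fun p => F p.1 p.2) (a, b) (d, e) s dF; rewrite eF.
Qed.

Lemma derive_le0_le01 {psi dpsi : R -> R} : (forall s : R, is_derive s 1 psi (dpsi s)) ->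
  (forall s, 0 <= s <= 1 -> dpsi s <= 0) -> psi 1 <= psi 0.
Proof.
move=> hd hle; have dv x : derivable psi x 1 by case: (hd x).
apply: (@ler0_derive1_le_cc R psi 0 1) => //; rewrite ?in_itv /= ?lexx ?ler01 //.
- move=> x; rewrite in_itv /= => /andP[x0 x1].
  by rewrite derive1E derive_val hle // ltW // ltW.
- by apply: derivable_within_continuous => x _; exact: dv.
Qed.

(* Compare phi with the two parabolas phi 0 + t phi'(0) +- L t^2 / 2. *)
Lemma taylor1_error_le {phi dphi : R -> R} (L : R) : (forall s : R, is_derive s 1 phi (dphi s)) ->
  (forall s, 0 <= s <= 1 -> `|dphi s - dphi 0| <= L * s) ->
  `|phi 1 - phi 0 - dphi 0| <= L / 2.
Proof.
move=> hd hL.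
have gap_derive (c s : R) : is_derive s 1 (fun t => phi t - (0 + t * dphi 0 + t ^+ 2 * c))
    (dphi s - (dphi 0 + 2 * s * c)).
  by eapply is_derive_eq; first exact (is_deriveB (hd s) (is_derive_quadratic 0 (dphi 0) c s)).
have up := derive_le0_le01 (gap_derive (L / 2)).
have low := derive_le0_le01 (fun s => is_deriveN (gap_derive (- (L / 2)) s)).
rewrite ler_norml; apply/andP; split.
- have /= : - (phi 1 - (0 + 1 * dphi 0 + 1 ^+ 2 * - (L / 2)))
      <= - (phi 0 - (0 + 0 * dphi 0 + 0 ^+ 2 * - (L / 2))).
    apply: low => s /andP[s0 s1]; move: (hL s); rewrite s0 s1 ler_norml => /(_ isT).
    by move=> /andP[? ?]; lra.
  by rewrite expr1n expr0n /=; lra.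
- have /= : phi 1 - (0 + 1 * dphi 0 + 1 ^+ 2 * (L / 2))
      <= phi 0 - (0 + 0 * dphi 0 + 0 ^+ 2 * (L / 2)).
    apply: up => s /andP[s0 s1]; move: (hL s); rewrite s0 s1 ler_norml => /(_ isT).
    by move=> /andP[? ?]; lra.
  by rewrite expr1n expr0n /=; lra.
Qed.

End Calculus.

Section Projection.
Context {R : realType}.

Lemma convex_segment {n} {A : set 'rV[R]_n} {a b : 'rV[R]_n} {t : R} :
  convex_set A -> A a -> A b -> 0 <= t <= 1 -> A (a + t *: (b - a)).
Proof.
move=> cA Aa Ab /andP[t0 t1].
have := cA b a (Itv01 t0 t1); rewrite !inE => /(_ Ab Aa).
congr A; change (t *: b + (1 - t) *: a = a + t *: (b - a)).
by rewrite scalerBr scalerBl scale1r addrCA.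
Qed.

Lemma le0_of_le_mul {x S : R} : 0 <= S -> (forall t, 0 < t <= 1 -> x <= t * S) -> x <= 0.
Proof.
move=> S0 h; rewrite leNgt; apply/negP => x0.
have xS : 0 < x + S by lra.
have t0 : 0 < x / (x + S) by rewrite divr_gt0.
have t1 : x / (x + S) <= 1 by rewrite ler_pdivrMr // mul1r; lra.
have := h (x / (x + S)); rewrite t0 t1 => /(_ isT).
have : x / (x + S) * S < x by rewrite mulrAC ltr_pdivrMr //; nra.
lra.
Qed.

Lemma is_proj_obtuse {n} {C : set 'rV[R]_n} {a p q : 'rV[R]_n} :
  convex_set C -> is_proj C a p -> C q -> dotv (a - p) (q - p) <= 0.
Proof.
move=> cC [Cp p_min] Cq; apply: (le0_of_le_mul (sqn_ge0 (q - p))) => t /andP[t0 t1].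
have Ct : C (p + t *: (q - p)) by apply: convex_segment; rewrite ?(ltW t0).
have := p_min _ Ct; rewrite /enorm ler_sqrt; last exact: sqn_ge0.
rewrite opprD addrA [sqn (_ - t *: _)]sqnB sqnZ dotvZr => h.
have := mulr_ge0 (ltW t0) (sqn_ge0 (q - p)).
by rewrite -(ler_pM2l t0); nra.
Qed.

Lemma is_proj_grad_step {n} {C : set 'rV[R]_n} {a g a1 : 'rV[R]_n} {c : R} : convex_set C ->
  is_proj C (a - c *: g) a1 -> C a -> c * dotv g (a1 - a) <= - sqn (a1 - a).
Proof.
move=> cC pa1 Ca; have := is_proj_obtuse cC pa1 Ca.
have -> : a - c *: g - a1 = - (c *: g + (a1 - a)) by rewrite opprD opprB addrAC addrC.
have -> : a - a1 = - (a1 - a) by rewrite opprB.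
by rewrite dotvNl dotvNr opprK dotvDl dotvZl /sqn; lra.
Qed.

Lemma grad_step_dotv {n} (a g : 'rV[R]_n) (c : R) :
  c * dotv g (a - c *: g - a) = - sqn (a - c *: g - a).
Proof. by rewrite addrAC subrr add0r dotvNr sqnN dotvZr sqnZ /sqn; ring. Qed.

Lemma is_proj_seq_mem {m n} {C1 : set 'rV[R]_m} {C2 : set 'rV[R]_n} {b1 y : nat -> 'rV[R]_m}
    {b2 l : nat -> 'rV[R]_n} {T : nat} :
  C1 (y 0%N) -> C2 (l 0%N) ->
  (forall t, (t < T)%N -> is_proj C1 (b1 t) (y t.+1) /\ is_proj C2 (b2 t) (l t.+1)) ->
  forall t, (t <= T)%N -> C1 (y t) /\ C2 (l t).
Proof.
move=> Cy0 Cl0 proj; elim=> [|t IH] // tT.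
by have [[? _] [? _]] := proj t tT.
Qed.

End Projection.

Section DescentLemma.
Context {R : realType} {m n : nat}.
Context {C1 : set 'rV[R]_m} {C2 : set 'rV[R]_n} {F : 'rV[R]_m -> 'rV[R]_n -> R}
  {G1 : 'rV[R]_m -> 'rV[R]_n -> 'rV[R]_m} {G2 : 'rV[R]_m -> 'rV[R]_n -> 'rV[R]_n} {L : R}.
Hypotheses (cC1 : convex_set C1) (cC2 : convex_set C2) (L_ge0 : 0 <= L).
Hypothesis F_grad : is_line_grad F G1 G2.
Hypothesis G_lipschitz : forall a a' b b', C1 a -> C1 a' -> C2 b -> C2 b' ->
  sqn (G1 a' b' - G1 a b) + sqn (G2 a' b' - G2 a b) <= L ^+ 2 * (sqn (a' - a) + sqn (b' - b)).

Lemma descent_lemma {a a' b b'} : C1 a -> C1 a' -> C2 b -> C2 b' ->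
  `|F a' b' - F a b - (dotv (G1 a b) (a' - a) + dotv (G2 a b) (b' - b))|
    <= L / 2 * (sqn (a' - a) + sqn (b' - b)).
Proof.
move=> Ca Ca' Cb Cb'; set N := sqn (a' - a) + sqn (b' - b).
have := taylor1_error_le (L * N) (F_grad a (a' - a) b (b' - b)).
rewrite /= !scale0r !addr0 !scale1r !subrKC mulrAC; apply=> s /andP[s0 s1].
have Cas : C1 (a + s *: (a' - a)) by apply: convex_segment; rewrite ?s0.
have Cbs : C2 (b + s *: (b' - b)) by apply: convex_segment; rewrite ?s0.
have add_subl k (x y : 'rV[R]_k) : x + y - x = y by rewrite addrAC subrr add0r.
have := G_lipschitz _ _ _ _ Ca Cas Cb Cbs; rewrite !add_subl !sqnZ => hG.
rewrite opprD addrACA -!dotvBl -dotv_row_mx -[N]sqn_row_mx mulrAC.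
apply: ler_norm_dotv; first exact: mulr_ge0.
by rewrite !sqn_row_mx exprMn; lra.
Qed.

End DescentLemma.

Definition optval {R : realType} {m n} (C1 : set 'rV[R]_m) (C2 : set 'rV[R]_n)
    (Q : 'rV[R]_m -> 'rV[R]_n -> R) : R :=
  sup [set Q p.1 p.2 | p in C1 `*` C2].

Section OptimalValue.
Context {R : realType} {m n : nat}.

Lemma optval_le {C1 : set 'rV[R]_m} {C2 : set 'rV[R]_n} {Q : 'rV[R]_m -> 'rV[R]_n -> R}
    {y0 l0 B} : C1 y0 -> C2 l0 ->
  (forall y l, C1 y -> C2 l -> Q y l <= B) -> optval C1 C2 Q <= B.
Proof.
move=> Cy0 Cl0 QB; apply: ge_sup; first by exists (Q y0 l0), (y0, l0).
by move=> _ [[y l] [/= Cy Cl] <-]; exact: QB.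
Qed.

Lemma optval_adherent (C1 : set 'rV[R]_m) (C2 : set 'rV[R]_n) (Q : 'rV[R]_m -> 'rV[R]_n -> R)
    {d} : has_sup [set Q p.1 p.2 | p in C1 `*` C2] -> 0 < d ->
  exists2 p, C1 p.1 /\ C2 p.2 & optval C1 C2 Q - d < Q p.1 p.2.
Proof. by move=> Qsup d0; have [_ [p [Cp1 Cp2] <-]] := sup_adherent d0 Qsup; exists p. Qed.

End OptimalValue.

Section StronglyConcaveMaximization.
Context {R : realType} {m n : nat}.
Context {C1 : set 'rV[R]_m} {C2 : set 'rV[R]_n} {Q : 'rV[R]_m -> 'rV[R]_n -> R}
  {G1 : 'rV[R]_m -> 'rV[R]_n -> 'rV[R]_m} {G2 : 'rV[R]_m -> 'rV[R]_n -> 'rV[R]_n} {kap : R}.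
Hypotheses (cC1 : convex_set C1) (cC2 : convex_set C2) (kap_gt0 : 0 < kap).
Hypothesis Q_sconcave : forall y l y' l', C1 y -> C2 l -> C1 y' -> C2 l' ->
  Q y' l' <= Q y l + (dotv (G1 y l) (y' - y) + dotv (G2 y l) (l' - l))
             - kap / 2 * (sqn (y' - y) + sqn (l' - l)).

Lemma sconcave_segment {y l y' l' th} : C1 y -> C2 l -> C1 y' -> C2 l' -> 0 <= th <= 1 ->
  (1 - th) * Q y l + th * Q y' l' + kap / 2 * th * (1 - th) * (sqn (y' - y) + sqn (l' - l))
  <= Q (y + th *: (y' - y)) (l + th *: (l' - l)).
Proof.
move=> Cy Cl Cy' Cl' th01; have /andP[th0 th1] := th01.
have Cyt := convex_segment cC1 Cy Cy' th01; have Clt := convex_segment cC2 Cl Cl' th01.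
have to_start k (a b : 'rV[R]_k) : a - (a + th *: (b - a)) = (- th) *: (b - a).
  by rewrite opprD addrA subrr add0r scaleNr.
have to_end k (a b : 'rV[R]_k) : b - (a + th *: (b - a)) = (1 - th) *: (b - a).
  by rewrite scalerBl scale1r opprD addrA.
have := Q_sconcave _ _ _ _ Cyt Clt Cy Cl; have := Q_sconcave _ _ _ _ Cyt Clt Cy' Cl'.
rewrite !to_start !to_end !dotvZr !sqnZ => h_end h_start.
have th1' : 0 <= 1 - th by rewrite subr_ge0.
have := ler_wpM2l th1' h_start; have := ler_wpM2l th0 h_end.
have := sqn_ge0 (y' - y); have := sqn_ge0 (l' - l); nra.
Qed.

Lemma has_sup_optval {y0 l0} : C1 y0 -> C2 l0 -> has_sup [set Q p.1 p.2 | p in C1 `*` C2].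
Proof.
move=> Cy0 Cl0; split; first by exists (Q y0 l0), (y0, l0).
exists (Q y0 l0 + (sqn (G1 y0 l0) + sqn (G2 y0 l0)) / (2 * kap)).
move=> _ [[y l] [/= Cy Cl] <-]; have := Q_sconcave _ _ _ _ Cy0 Cl0 Cy Cl.
have kapV_gt0 : 0 < kap^-1 by rewrite invr_gt0.
have := young_dotv (G1 y0 l0) (y - y0) kapV_gt0.
have := young_dotv (G2 y0 l0) (l - l0) kapV_gt0.
have -> : (sqn (G1 y0 l0) + sqn (G2 y0 l0)) / (2 * kap)
    = (kap^-1 * sqn (G1 y0 l0) + kap^-1 * sqn (G2 y0 l0)) / 2 by field; rewrite gt_eqF.
rewrite !invrK; lra.
Qed.

Lemma le_optval {y l} : C1 y -> C2 l -> Q y l <= optval C1 C2 Q.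
Proof.
move=> Cy Cl; move: (sup_upper_bound (has_sup_optval Cy Cl)) => /(_ (Q y l)); apply.
by exists (y, l).
Qed.

(* Strong concavity at the midpoint of (yd, ld) and (y, l). *)
Lemma optval_growth {d yd ld y l} : C1 yd -> C2 ld -> C1 y -> C2 l ->
  optval C1 C2 Q - d <= Q yd ld ->
  Q y l <= optval C1 C2 Q + d - kap / 4 * (sqn (y - yd) + sqn (l - ld)).
Proof.
move=> Cyd Cld Cy Cl near.
have half : 0 <= (1 / 2 : R) <= 1 by apply/andP; split; lra.
have := sconcave_segment Cyd Cld Cy Cl half.
have := le_optval (convex_segment cC1 Cyd Cy half) (convex_segment cC2 Cld Cl half).
lra.
Qed.

(* Used with Q = Q(w^k, .), Q' = Q(w^{k+1}, .), ell the derivative of Q in w along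
   w^{k+1} - w^k, N = |w^{k+1} - w^k|^2 and (yh, lh) the output of the inner loop. *)
Lemma optval_descent (Q' ell : 'rV[R]_m -> 'rV[R]_n -> R) (N Lw M beta gam : R) yh lh :
  C1 yh -> C2 lh -> 0 < M -> 0 < gam ->
  has_sup [set Q' p.1 p.2 | p in C1 `*` C2] ->
  (forall y l, C1 y -> C2 l -> Q' y l <= Q y l + ell y l + Lw / 2 * N) ->
  (forall y l y' l' c, C1 y -> C2 l -> C1 y' -> C2 l' -> 0 < c ->
     2 * (ell y' l' - ell y l) <= c * M * (sqn (y' - y) + sqn (l' - l)) + N / c) ->
  ell yh lh <= - beta * N ->
  (beta - Lw / 2 - M / kap - 1 / (2 * gam)) * N
    <= optval C1 C2 Q - optval C1 C2 Q' + 2 * gam * M / kap * (optval C1 C2 Q - Q yh lh).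
Proof.
move=> Cyh Clh M_gt0 gam_gt0 Q'_sup Q'_le ell_young ell_yh.
set K := 2 * gam * M / kap.
have K_ge0 : 0 <= K by rewrite /K !(mulr_ge0, invr_ge0) // ltW.
apply/ler_addgt0Pr => e e_gt0; set d := e / (2 + K).
have d_gt0 : 0 < d by rewrite divr_gt0 //; lra.
have -> : e = (2 + K) * d by rewrite /d mulrC divfK //; apply: lt0r_neq0; lra.
have [[q1 q2] [/= Cq1 Cq2] q_near] := optval_adherent C1 C2 Q' Q'_sup d_gt0.
have [[p1 p2] [/= Cp1 Cp2] p_near] := optval_adherent C1 C2 Q (has_sup_optval Cyh Clh) d_gt0.
have q_growth := optval_growth Cp1 Cp2 Cq1 Cq2 (ltW p_near).
have yh_growth := optval_growth Cp1 Cp2 Cyh Clh (ltW p_near).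
rewrite (sqn_subC yh) (sqn_subC lh) in yh_growth.
have c_gt0 : 0 < kap / (2 * M) by rewrite divr_gt0 // mulr_gt0.
have := ell_young _ _ _ _ _ Cp1 Cp2 Cq1 Cq2 c_gt0.
have -> : kap / (2 * M) * M = kap / 2 by field; rewrite gt_eqF.
have -> : N / (kap / (2 * M)) = 2 * (M / kap * N) by field; rewrite !gt_eqF.
have := ell_young _ _ _ _ _ Cyh Clh Cp1 Cp2 gam_gt0.
set S := sqn (p1 - yh) + sqn (p2 - lh) in yh_growth *.
have -> : gam * M * S = 2 * (K * (kap / 4 * S)) by rewrite /K; field; rewrite gt_eqF.
have yh_gap : kap / 4 * S <= optval C1 C2 Q + d - Q yh lh by lra.
have := ler_wpM2l K_ge0 yh_gap.
have := Q'_le _ _ Cq1 Cq2.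
have -> : 1 / (2 * gam) = gam^-1 / 2 by field; rewrite gt_eqF.
lra.
Qed.

Context {L : R}.
Hypothesis Q_smooth : forall y l y' l', C1 y -> C2 l -> C1 y' -> C2 l' ->
  Q y l + (dotv (G1 y l) (y' - y) + dotv (G2 y l) (l' - l))
    - L / 2 * (sqn (y' - y) + sqn (l' - l)) <= Q y' l'.

(* Test the projection inequalities at (y, l) + kap a ((y', l') - (y, l)). *)
Lemma pga_step_le {a y l y1 l1 y' l'} : 0 < a -> a * L <= 1 -> kap * a <= 1 ->
  C1 y -> C2 l -> C1 y' -> C2 l' ->
  is_proj C1 (y + a *: G1 y l) y1 -> is_proj C2 (l + a *: G2 y l) l1 ->
  Q y' l' - Q y1 l1 <= (1 - kap * a) * (Q y' l' - Q y l).
Proof.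
move=> a_gt0 aL ka Cy Cl Cy' Cl' py1 pl1; have [Cy1 _] := py1; have [Cl1 _] := pl1.
have th01 : 0 <= kap * a <= 1 by rewrite ka andbT mulr_ge0 // ltW.
have Cyt := convex_segment cC1 Cy Cy' th01; have Clt := convex_segment cC2 Cl Cl' th01.
have vi := is_proj_obtuse cC1 py1 Cyt; have vi' := is_proj_obtuse cC2 pl1 Clt.
have smooth := Q_smooth _ _ _ _ Cy Cl Cy1 Cl1.
have conc := Q_sconcave _ _ _ _ Cy Cl Cyt Clt.
have seg := sconcave_segment Cy Cl Cy' Cl' th01.
have vi_expand k (b b1 b' g : 'rV[R]_k) :
    dotv (b + a *: g - b1) (b + (kap * a) *: (b' - b) - b1) =
    a * (kap * a) * dotv g (b' - b) - a * dotv g (b1 - b)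
    - (kap * a) * dotv (b1 - b) (b' - b) + sqn (b1 - b).
  have -> : b + a *: g - b1 = a *: g - (b1 - b) by rewrite opprB addrAC addrC.
  have -> : b + (kap * a) *: (b' - b) - b1 = (kap * a) *: (b' - b) - (b1 - b).
    by rewrite opprB addrAC addrC.
  move: (b1 - b) (b' - b) => e e'.
  by rewrite /sqn dotvBl !dotvBr !dotvZl !dotvZr; ring.
rewrite vi_expand in vi; rewrite vi_expand in vi'.
have shift k (b b' : 'rV[R]_k) : b + (kap * a) *: (b' - b) - b = (kap * a) *: (b' - b).
  by rewrite addrAC subrr add0r.
rewrite !shift !dotvZr !sqnZ in conc.
have := sqn_ge0 (y1 - y - (kap * a) *: (y' - y)); rewrite sqnB sqnZ dotvZr => sqy.
have := sqn_ge0 (l1 - l - (kap * a) *: (l' - l)); rewrite sqnB sqnZ dotvZr => sql.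
have aL' : 0 <= (1 - a * L) * (sqn (y1 - y) + sqn (l1 - l)).
  by apply: mulr_ge0; [rewrite subr_ge0 | rewrite addr_ge0 ?sqn_ge0].
have a_ge0 := ltW a_gt0.
have smooth' := ler_wpM2l a_ge0 smooth; have conc' := ler_wpM2l a_ge0 conc.
have seg' := ler_wpM2l a_ge0 seg.
by rewrite -(ler_pM2l a_gt0); lra.
Qed.

Lemma pga_step_contraction {a y l y1 l1} : 0 < a -> a * L <= 1 -> kap * a <= 1 ->
  C1 y -> C2 l -> is_proj C1 (y + a *: G1 y l) y1 -> is_proj C2 (l + a *: G2 y l) l1 ->
  optval C1 C2 Q - Q y1 l1 <= (1 - kap * a) * (optval C1 C2 Q - Q y l).
Proof.
move=> a_gt0 aL ka Cy Cl py1 pl1; have [Cy1 _] := py1; have [Cl1 _] := pl1.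
suff : optval C1 C2 Q <= Q y1 l1 + (1 - kap * a) * (optval C1 C2 Q - Q y l) by lra.
apply: (optval_le Cy1 Cl1) => y' l' Cy' Cl'.
have := pga_step_le a_gt0 aL ka Cy Cl Cy' Cl' py1 pl1.
have ka' : 0 <= 1 - kap * a by rewrite subr_ge0.
have := ler_wpM2l ka' (lerB (le_optval Cy' Cl') (lexx (Q y l))).
lra.
Qed.

Lemma pga_linear_convergence a T (y : nat -> 'rV[R]_m) (l : nat -> 'rV[R]_n) :
  0 < a -> a * L <= 1 -> kap * a <= 1 -> C1 (y 0%N) -> C2 (l 0%N) ->
  (forall t, (t < T)%N -> is_proj C1 (y t + a *: G1 (y t) (l t)) (y t.+1) /\
                         is_proj C2 (l t + a *: G2 (y t) (l t)) (l t.+1)) ->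
  optval C1 C2 Q - Q (y T) (l T)
    <= (1 - kap * a) ^+ T * (optval C1 C2 Q - Q (y 0%N) (l 0%N)).
Proof.
move=> a_gt0 aL ka Cy0 Cl0 steps; have mem := is_proj_seq_mem Cy0 Cl0 steps.
suff : forall t, (t <= T)%N -> optval C1 C2 Q - Q (y t) (l t)
    <= (1 - kap * a) ^+ t * (optval C1 C2 Q - Q (y 0%N) (l 0%N)) by apply.
elim=> [|t IH] tT; first by rewrite expr0 mul1r.
have [Cyt Clt] := mem t (ltnW tT); have [pyt plt] := steps t tT.
apply: le_trans (pga_step_contraction a_gt0 aL ka Cyt Clt pyt plt) _.
rewrite exprS -mulrA ler_wpM2l ?subr_ge0 //; exact: IH (ltnW tT).
Qed.

End StronglyConcaveMaximization.

Definition pgmad_iter {R : realType} (D : pdata R) (rho tau ax ay : R) (T : nat)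
    (x : nat -> 'rV[R]_(dx D)) (z y u : nat -> 'rV[R]_(dy D)) (lam v : nat -> 'rV[R]_(dl D))
    (yin : nat -> nat -> 'rV[R]_(dy D)) (lin : nat -> nat -> 'rV[R]_(dl D)) (k : nat) : Prop :=
  [/\ yin k 0%N = y k /\ lin k 0%N = lam k,
   (forall t, (t < T)%N ->
      is_proj (Ys D) (yin k t + ay *: grad_Qy D rho tau (x k) (z k) (u k) (v k) (yin k t) (lin k t))
              (yin k t.+1) /\
      is_proj (Ls D) (lin k t + ay *: grad_Ql D rho tau (x k) (z k) (u k) (v k) (yin k t) (lin k t))
              (lin k t.+1)),
   y k.+1 = yin k T /\ lam k.+1 = lin k T,
   is_proj (Xs D) (x k - ax *: grad_fx D (x k) (y k.+1) (lam k.+1)) (x k.+1) /\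
   is_proj (Ys D) (z k - (ax * rho) *: g_1 D (z k) (lam k.+1)) (z k.+1) &
   u k.+1 = (1 + ax * tau) *: u k - (ax * tau) *: y k.+1 /\
   v k.+1 = (1 + ax * tau) *: v k - (ax * tau) *: lam k.+1].

Lemma pgmad_feasible {R : realType} {D : pdata R} {rho tau ax ay : R} {T K : nat}
    {x z y u lam v yin lin} :
  Xs D (x 0%N) -> Ys D (z 0%N) -> Ys D (y 0%N) -> Ls D (lam 0%N) ->
  (forall k, (k < K)%N -> pgmad_iter D rho tau ax ay T x z y u lam v yin lin k) ->
  forall k, (k <= K)%N -> [/\ Xs D (x k), Ys D (z k), Ys D (y k) & Ls D (lam k)].
Proof.
move=> X0 Z0 Y0 L0 iter; elim=> [|k IH] kK //.
have [[yin0 lin0] inner [-> ->] [[Xx1 _] [Zz1 _]] _] := iter k kK.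
have [_ _ Yk Lk] := IH (ltnW kK); rewrite -yin0 in Yk; rewrite -lin0 in Lk.
by have [? ?] := is_proj_seq_mem Yk Lk inner T (leqnn T).
Qed.

Section PGMAD.
Context {R : realType} (D : pdata R).
Local Notation dx := (dx D). Local Notation dy := (dy D). Local Notation dl := (dl D).
Variables (Lf Lg rho kap tau : R).
Hypothesis hf : is_C1_grad (fbar D) (fbar_x D) (fbar_y D).
Hypothesis hg : is_C1_grad (gfun D) (g_1 D) (g_2 D).
Hypothesis hLf : forall x1 x2 y1 y2 l1 l2,
  Xs D x1 -> Xs D x2 -> Ys D y1 -> Ys D y2 -> Ls D l1 -> Ls D l2 ->
  enorm3 (grad_fx D x1 y1 l1 - grad_fx D x2 y2 l2)
         (grad_fy D x1 y1 l1 - grad_fy D x2 y2 l2)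
         (grad_fl D x1 y1 l1 - grad_fl D x2 y2 l2)
  <= Lf * enorm3 (x1 - x2) (y1 - y2) (l1 - l2).
Hypothesis hLg : forall y1 y2 l1 l2, Ys D y1 -> Ys D y2 -> Ls D l1 -> Ls D l2 ->
  enorm2 (g_1 D y1 l1 - g_1 D y2 l2) (g_2 D y1 l1 - g_2 D y2 l2)
  <= Lg * enorm2 (y1 - y2) (l1 - l2).
Hypotheses (Lf_ge0 : 0 <= Lf) (Lg_ge0 : 0 <= Lg) (rho_ge0 : 0 <= rho) (kap_gt0 : 0 < kap).
Hypotheses (cX : convex_set (Xs D)) (cY : convex_set (Ys D)) (cL : convex_set (Ls D)).
Hypothesis tau_ge : Lf + 2 * rho * Lg + kap <= tau.

Lemma fval_line (x ex : 'rV[R]_dx) (y ey : 'rV[R]_dy) (l el : 'rV[R]_dl) (s : R) :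
  is_derive s 1 (fun t : R => fval D (x + t *: ex) (y + t *: ey) (l + t *: el))
   (dotv (grad_fx D (x + s *: ex) (y + s *: ey) (l + s *: el)) ex
    + dotv (grad_fy D (x + s *: ex) (y + s *: ey) (l + s *: el)) ey
    + dotv (grad_fl D (x + s *: ex) (y + s *: ey) (l + s *: el)) el).
Proof.
set r := x *m (Am D)^T + y *m (Bm D)^T - cv D; set er := ex *m (Am D)^T + ey *m (Bm D)^T.
have affine (t : R) : (x + t *: ex) *m (Am D)^T + (y + t *: ey) *m (Bm D)^T - cv D = r + t *: er.
  by rewrite !mulmxDl -!scalemxAl; apply/rowP => i; rewrite !mxE; ring.
have -> : (fun t : R => fval D (x + t *: ex) (y + t *: ey) (l + t *: el)) =
    (fun t : R => fbar D (x + t *: ex) (y + t *: ey) + dotv (l + t *: el) (r + t *: er)).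
  by apply/funext => t; rewrite /fval affine.
eapply is_derive_eq.
  exact (is_deriveD (is_C1_grad_line hf x ex y ey s) (is_derive_dotv_line l el r er s)).
rewrite /grad_fx /grad_fy /grad_fl affine !dotvDl.
rewrite -(dotv_mulmx_tr (l + s *: el) ex) -(dotv_mulmx_tr (l + s *: el) ey) /r /er.
by rewrite !dotvDl !dotvDr !dotvNl !dotvNr !dotvZl !dotvZr !(dotvC el); ring.
Qed.

Lemma fval_line_grad_xl y : is_line_grad (fun x l => fval D x y l)
  (fun x l => grad_fx D x y l) (fun x l => grad_fl D x y l).
Proof.
move=> x ex l el s.
rewrite (_ : (fun t => _) = fun t => fval D (x + t *: ex) (y + t *: 0) (l + t *: el)).
  by have := fval_line x ex y 0 l el s; rewrite !scaler0 !addr0 dotv0r addr0.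
by apply/funext => t; rewrite scaler0 addr0.
Qed.

Lemma fval_line_grad_yl x : is_line_grad (fun y l => fval D x y l)
  (fun y l => grad_fy D x y l) (fun y l => grad_fl D x y l).
Proof.
move=> y ey l el s.
rewrite (_ : (fun t => _) = fun t => fval D (x + t *: 0) (y + t *: ey) (l + t *: el)).
  by have := fval_line x 0 y ey l el s; rewrite !scaler0 !addr0 dotv0r add0r.
by apply/funext => t; rewrite scaler0 addr0.
Qed.

Lemma grad_f_lipschitz_xl {y} : Ys D y ->
  forall x x' l l', Xs D x -> Xs D x' -> Ls D l -> Ls D l' ->
  sqn (grad_fx D x' y l' - grad_fx D x y l) + sqn (grad_fl D x' y l' - grad_fl D x y l)
    <= Lf ^+ 2 * (sqn (x' - x) + sqn (l' - l)).
Proof.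
move=> Yy x x' l l' Xx Xx' Ll Ll'.
have := enorm3_le_sqr Lf_ge0 (hLf _ _ _ _ _ _ Xx' Xx Yy Yy Ll' Ll); rewrite subrr sqn0 addr0.
by have := sqn_ge0 (grad_fy D x' y l' - grad_fy D x y l); lra.
Qed.

Lemma grad_f_lipschitz_yl {x} : Xs D x ->
  forall y y' l l', Ys D y -> Ys D y' -> Ls D l -> Ls D l' ->
  sqn (grad_fy D x y' l' - grad_fy D x y l) + sqn (grad_fl D x y' l' - grad_fl D x y l)
    <= Lf ^+ 2 * (sqn (y' - y) + sqn (l' - l)).
Proof.
move=> Xx y y' l l' Yy Yy' Ll Ll'.
have := enorm3_le_sqr Lf_ge0 (hLf _ _ _ _ _ _ Xx Xx Yy' Yy Ll' Ll); rewrite subrr sqn0 add0r.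
by have := sqn_ge0 (grad_fx D x y' l' - grad_fx D x y l); lra.
Qed.

Lemma grad_g_lipschitz y y' l l' : Ys D y -> Ys D y' -> Ls D l -> Ls D l' ->
  sqn (g_1 D y' l' - g_1 D y l) + sqn (g_2 D y' l' - g_2 D y l)
    <= Lg ^+ 2 * (sqn (y' - y) + sqn (l' - l)).
Proof. by move=> Yy Yy' Ll Ll'; apply: enorm2_le_sqr Lg_ge0 (hLg _ _ _ _ Yy' Yy Ll' Ll). Qed.

Lemma Qfun_taylor_yl {x z} u v {y l y' l'} :
  Xs D x -> Ys D z -> Ys D y -> Ls D l -> Ys D y' -> Ls D l' ->
  `|Qfun D rho tau x z u v y' l' - Qfun D rho tau x z u v y l
    - (dotv (grad_Qy D rho tau x z u v y l) (y' - y)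
       + dotv (grad_Ql D rho tau x z u v y l) (l' - l))
    + tau / 2 * (sqn (y' - y) + sqn (l' - l))|
  <= (Lf + 2 * rho * Lg) / 2 * (sqn (y' - y) + sqn (l' - l)).
Proof.
move=> Xx Yz Yy Ll Yy' Ll'.
have ef := descent_lemma cY cL Lf_ge0 (fval_line_grad_yl x) (grad_f_lipschitz_yl Xx)
  Yy Yy' Ll Ll'.
have eg := descent_lemma cY cL Lg_ge0 (is_C1_grad_line hg) grad_g_lipschitz Yy Yy' Ll Ll'.
have egz := descent_lemma cY cL Lg_ge0 (is_C1_grad_line hg) grad_g_lipschitz Yz Yz Ll Ll'.
rewrite subrr dotv0r sqn0 !add0r in egz.
have rho_norm (e b : R) : `|e| <= b -> `|rho * e| <= rho * b.
  by move=> eb; rewrite normrM ger0_norm // ler_wpM2l.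
move: eg egz => /rho_norm eg /rho_norm egz.
set Ef := fval D x y' l' - _ - _ in ef; set Eg := gfun D y' l' - _ - _ in eg.
set Egz := gfun D z l' - _ - _ in egz.
have -> : Qfun D rho tau x z u v y' l' - Qfun D rho tau x z u v y l
    - (dotv (grad_Qy D rho tau x z u v y l) (y' - y)
       + dotv (grad_Ql D rho tau x z u v y l) (l' - l))
    + tau / 2 * (sqn (y' - y) + sqn (l' - l)) = Ef - rho * Eg + rho * Egz.
  rewrite /Ef /Eg /Egz /Qfun /Prho /grad_Qy /grad_Ql.
  have -> : y' - u = (y - u) + (y' - y) by rewrite [RHS]addrC addrA subrK.
  have -> : l' - v = (l - v) + (l' - l) by rewrite [RHS]addrC addrA subrK.
  move: (y - u) (y' - y) (l - v) (l' - l) => a b c d.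
  by rewrite !sqnD !dotvBl !dotvZl !dotvBl; lra.
have := normr_ge0 Ef; have := mulr_ge0 rho_ge0 (mulr_ge0 Lg_ge0 (sqn_ge0 (y' - y))).
move: (ler_normD (Ef - rho * Eg) (rho * Egz)) (ler_normB Ef (rho * Eg)); lra.
Qed.

Lemma Qfun_sconcave {x z} u v : Xs D x -> Ys D z -> forall y l y' l',
  Ys D y -> Ls D l -> Ys D y' -> Ls D l' ->
  Qfun D rho tau x z u v y' l' <= Qfun D rho tau x z u v y l
    + (dotv (grad_Qy D rho tau x z u v y l) (y' - y)
       + dotv (grad_Ql D rho tau x z u v y l) (l' - l))
    - kap / 2 * (sqn (y' - y) + sqn (l' - l)).
Proof.
move=> Xx Yz y l y' l' Yy Ll Yy' Ll'.
have := Qfun_taylor_yl u v Xx Yz Yy Ll Yy' Ll'; rewrite ler_norml => /andP[_].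
have : 0 <= (tau - (Lf + 2 * rho * Lg + kap)) * (sqn (y' - y) + sqn (l' - l)).
  by rewrite mulr_ge0 ?subr_ge0 ?addr_ge0 ?sqn_ge0.
lra.
Qed.

Lemma Qfun_smooth {x z} u v : Xs D x -> Ys D z -> forall y l y' l',
  Ys D y -> Ls D l -> Ys D y' -> Ls D l' ->
  Qfun D rho tau x z u v y l
    + (dotv (grad_Qy D rho tau x z u v y l) (y' - y)
       + dotv (grad_Ql D rho tau x z u v y l) (l' - l))
    - (Lf + 2 * rho * Lg + tau) / 2 * (sqn (y' - y) + sqn (l' - l))
  <= Qfun D rho tau x z u v y' l'.
Proof.
move=> Xx Yz y l y' l' Yy Ll Yy' Ll'.
by have := Qfun_taylor_yl u v Xx Yz Yy Ll Yy' Ll'; rewrite ler_norml => /andP[+ _]; lra.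
Qed.

(* The derivative of Q in w = (x, z, u, v) in the direction (ex, ez, eu, ev). *)
Definition Qfun_dw x (z u : 'rV[R]_dy) (v : 'rV[R]_dl) ex ez eu ev (y : 'rV[R]_dy) l : R :=
  dotv (grad_fx D x y l) ex + dotv (rho *: g_1 D z l) ez
  + dotv (tau *: (y - u)) eu + dotv (tau *: (l - v)) ev.

Lemma Qfun_upper_w x x1 z z1 u u1 v v1 y l :
  Xs D x -> Xs D x1 -> Ys D z -> Ys D z1 -> Ys D y -> Ls D l ->
  Qfun D rho tau x1 z1 u1 v1 y l <= Qfun D rho tau x z u v y l
    + Qfun_dw x z u v (x1 - x) (z1 - z) (u1 - u) (v1 - v) y l
    + (Lf + rho * Lg) / 2 * (sqn (x1 - x) + sqn (z1 - z) + sqn (u1 - u) + sqn (v1 - v)).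
Proof.
move=> Xx Xx1 Yz Yz1 Yy Ll.
have := descent_lemma cX cL Lf_ge0 (fval_line_grad_xl y) (grad_f_lipschitz_xl Yy) Xx Xx1 Ll Ll.
have := descent_lemma cY cL Lg_ge0 (is_C1_grad_line hg) grad_g_lipschitz Yz Yz1 Ll Ll.
rewrite /= !subrr !dotv0r !sqn0 !addr0 !ler_norml => /andP[_ ez] /andP[_ ex].
have := ler_wpM2l rho_ge0 ez; rewrite /Qfun /Prho /Qfun_dw.
have -> : y - u1 = (y - u) - (u1 - u) by rewrite opprB addrA subrK.
have -> : l - v1 = (l - v) - (v1 - v) by rewrite opprB addrA subrK.
rewrite [sqn (y - u - _)]sqnB [sqn (l - v - _)]sqnB !dotvZl.
have tau_ge0 : 0 <= tau.
  by have := mulr_ge0 rho_ge0 Lg_ge0; have := kap_gt0; have := tau_ge; have := Lf_ge0; lra.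
have sx := sqn_ge0 (x1 - x); have sz := sqn_ge0 (z1 - z).
have su := sqn_ge0 (u1 - u); have sv := sqn_ge0 (v1 - v).
have := mulr_ge0 Lf_ge0 (addr_ge0 (addr_ge0 sz su) sv).
have := mulr_ge0 (mulr_ge0 rho_ge0 Lg_ge0) (addr_ge0 (addr_ge0 sx su) sv).
have := mulr_ge0 tau_ge0 (addr_ge0 su sv).
lra.
Qed.

Lemma grad_w_lipschitz {x z} u v {y l y' l'} :
  Xs D x -> Ys D z -> Ys D y -> Ls D l -> Ys D y' -> Ls D l' ->
  sqn (grad_fx D x y' l' - grad_fx D x y l) + sqn (rho *: g_1 D z l' - rho *: g_1 D z l)
  + sqn (tau *: (y' - u) - tau *: (y - u)) + sqn (tau *: (l' - v) - tau *: (l - v))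
  <= (Lf ^+ 2 + rho ^+ 2 * Lg ^+ 2 + tau ^+ 2) * (sqn (y' - y) + sqn (l' - l)).
Proof.
move=> Xx Yz Yy Ll Yy' Ll'.
have hfx := enorm3_le_sqr Lf_ge0 (hLf _ _ _ _ _ _ Xx Xx Yy' Yy Ll' Ll).
have hg1 := enorm2_le_sqr Lg_ge0 (hLg _ _ _ _ Yz Yz Ll' Ll).
rewrite !subrr !sqn0 !add0r in hfx hg1.
have subBB k (a b c : 'rV[R]_k) : a - c - (b - c) = a - b by rewrite opprB addrA subrK.
rewrite -!scalerBr !sqnZ !subBB.
have := ler_wpM2l (sqr_ge0 rho) hg1.
have := sqn_ge0 (grad_fy D x y' l' - grad_fy D x y l).
have := sqn_ge0 (grad_fl D x y' l' - grad_fl D x y l).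
have := mulr_ge0 (sqr_ge0 rho) (sqn_ge0 (g_2 D z l' - g_2 D z l)).
have := mulr_ge0 (mulr_ge0 (sqr_ge0 rho) (sqr_ge0 Lg)) (sqn_ge0 (y' - y)).
lra.
Qed.

Lemma Qfun_dw_young x z u v ex ez eu ev : Xs D x -> Ys D z -> forall y l y' l' c,
  Ys D y -> Ls D l -> Ys D y' -> Ls D l' -> 0 < c ->
  2 * (Qfun_dw x z u v ex ez eu ev y' l' - Qfun_dw x z u v ex ez eu ev y l)
  <= c * (Lf ^+ 2 + rho ^+ 2 * Lg ^+ 2 + tau ^+ 2) * (sqn (y' - y) + sqn (l' - l))
     + (sqn ex + sqn ez + sqn eu + sqn ev) / c.
Proof.
move=> Xx Yz y l y' l' c Yy Ll Yy' Ll' c_gt0.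
have := ler_wpM2l (ltW c_gt0) (grad_w_lipschitz u v Xx Yz Yy Ll Yy' Ll').
have := young_dotv (grad_fx D x y' l' - grad_fx D x y l) ex c_gt0.
have := young_dotv (rho *: g_1 D z l' - rho *: g_1 D z l) ez c_gt0.
have := young_dotv (tau *: (y' - u) - tau *: (y - u)) eu c_gt0.
have := young_dotv (tau *: (l' - v) - tau *: (l - v)) ev c_gt0.
rewrite /Qfun_dw !dotvBl; lra.
Qed.

Lemma Qfun_dw_grad_step ax x x1 z z1 u u1 v v1 y l : 0 < ax -> Xs D x -> Ys D z ->
  is_proj (Xs D) (x - ax *: grad_fx D x y l) x1 ->
  is_proj (Ys D) (z - (ax * rho) *: g_1 D z l) z1 ->
  u1 = (1 + ax * tau) *: u - (ax * tau) *: y ->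
  v1 = (1 + ax * tau) *: v - (ax * tau) *: l ->
  Qfun_dw x z u v (x1 - x) (z1 - z) (u1 - u) (v1 - v) y l
    <= - ax^-1 * (sqn (x1 - x) + sqn (z1 - z) + sqn (u1 - u) + sqn (v1 - v)).
Proof.
move=> ax_gt0 Xx Yz px pz -> ->.
have step k (a b : 'rV[R]_k) : (1 + ax * tau) *: a - (ax * tau) *: b = a - ax *: (tau *: (b - a)).
  by apply/rowP => i; rewrite !mxE; ring.
rewrite !step.
have hu := grad_step_dotv u (tau *: (y - u)) ax.
have hv := grad_step_dotv v (tau *: (l - v)) ax.
have hx := is_proj_grad_step cX px Xx.
rewrite -scalerA in pz; have hz := is_proj_grad_step cY pz Yz.
rewrite -(ler_pM2l ax_gt0) mulrA mulrN mulfV ?gt_eqF // mulN1r /Qfun_dw; lra.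
Qed.

Lemma vartheta_descent {ax gam x x1 z z1 u u1 v v1 y l} : 0 < ax -> 0 < gam ->
  Xs D x -> Ys D z -> Ys D y -> Ls D l ->
  is_proj (Xs D) (x - ax *: grad_fx D x y l) x1 ->
  is_proj (Ys D) (z - (ax * rho) *: g_1 D z l) z1 ->
  u1 = (1 + ax * tau) *: u - (ax * tau) *: y ->
  v1 = (1 + ax * tau) *: v - (ax * tau) *: l ->
  (ax^-1 - (Lf + rho * Lg) / 2 - (Lf ^+ 2 + rho ^+ 2 * Lg ^+ 2 + tau ^+ 2) / kap - 1 / (2 * gam))
    * (sqn (x1 - x) + sqn (z1 - z) + sqn (u1 - u) + sqn (v1 - v))
  <= vartheta D rho tau x z u v - vartheta D rho tau x1 z1 u1 v1
     + 2 * gam * (Lf ^+ 2 + rho ^+ 2 * Lg ^+ 2 + tau ^+ 2) / kap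
       * (vartheta D rho tau x z u v - Qfun D rho tau x z u v y l).
Proof.
move=> ax_gt0 gam_gt0 Xx Yz Yy Ll px pz eu ev; have [Xx1 _] := px; have [Yz1 _] := pz.
have tau_gt0 : 0 < tau.
  by have := mulr_ge0 rho_ge0 Lg_ge0; have := kap_gt0; have := tau_ge; have := Lf_ge0; lra.
apply: (optval_descent cY cL kap_gt0 (Qfun_sconcave u v Xx Yz) (Qfun D rho tau x1 z1 u1 v1)
  (Qfun_dw x z u v (x1 - x) (z1 - z) (u1 - u) (v1 - v))) => //.
- by rewrite ltr_wpDl ?exprn_gt0 // addr_ge0 ?mulr_ge0 ?sqr_ge0.
- exact: (has_sup_optval (Q := Qfun D rho tau x1 z1 u1 v1) kap_gt0
    (Qfun_sconcave u1 v1 Xx1 Yz1) Yy Ll).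
- by move=> q1 q2 Yq Lq; apply: Qfun_upper_w.
- exact: Qfun_dw_young.
- exact: Qfun_dw_grad_step px pz eu ev.
Qed.

Definition Ltheta := (Lf + rho * Lg + 2 * tau) * (1 + (Lf + 2 * rho * Lg + tau) / kap).

Lemma Ltheta_ge :
  2 * (Lf + rho * Lg) + 4 * (Lf ^+ 2 + rho ^+ 2 * Lg ^+ 2 + tau ^+ 2) / kap <= 3 * Ltheta.
Proof.
have b_ge0 := mulr_ge0 rho_ge0 Lg_ge0.
have Lf_le : Lf <= tau by have := kap_gt0; have := tau_ge; lra.
have key : 4 * (Lf ^+ 2 + rho ^+ 2 * Lg ^+ 2 + tau ^+ 2)
    <= 3 * ((Lf + rho * Lg + 2 * tau) * (Lf + 2 * rho * Lg + tau)).
  have := ler_wpM2l Lf_ge0 Lf_le; have := mulr_ge0 b_ge0 Lf_ge0.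
  have tau_ge0 : 0 <= tau by have := kap_gt0; have := tau_ge; have := Lf_ge0; lra.
  have := mulr_ge0 b_ge0 tau_ge0; have := mulr_ge0 tau_ge0 Lf_ge0.
  have := mulr_ge0 b_ge0 b_ge0; have := mulr_ge0 tau_ge0 tau_ge0.
  rewrite -exprMn !expr2; lra.
have -> : 3 * Ltheta = 3 * (Lf + rho * Lg + 2 * tau)
    + 3 * ((Lf + rho * Lg + 2 * tau) * (Lf + 2 * rho * Lg + tau)) / kap.
  by rewrite /Ltheta; field; rewrite gt_eqF.
have kapV_ge0 : 0 <= kap^-1 by rewrite invr_ge0 ltW.
have := ler_wpM2r kapV_ge0 key; have := kap_gt0; have := tau_ge; have := Lf_ge0; lra.
Qed.

Lemma pgmad_coef_le {ax} : 0 < ax -> ax * Ltheta < 1 ->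
  (1 - ax * Ltheta) / (4 * ax)
  <= ax^-1 - (Lf + rho * Lg) / 2 - (Lf ^+ 2 + rho ^+ 2 * Lg ^+ 2 + tau ^+ 2) / kap
     - 1 / (2 * (ax / (1 - ax * Ltheta))).
Proof.
move=> ax_gt0 axL; have Lth_ge := ler_wpM2l (ltW ax_gt0) Ltheta_ge.
have ax_neq0 : ax != 0 by rewrite gt_eqF.
have axL_neq0 : 1 - ax * Ltheta != 0 by rewrite subr_eq0 eq_sym lt_eqF.
have kap_neq0 : kap != 0 by rewrite gt_eqF.
have ax4_gt0 : 0 < 4 * ax by rewrite mulr_gt0.
rewrite -(ler_pM2l ax4_gt0).
have -> : 4 * ax * ((1 - ax * Ltheta) / (4 * ax)) = 1 - ax * Ltheta by field.
set M := Lf ^+ 2 + rho ^+ 2 * Lg ^+ 2 + tau ^+ 2 in Lth_ge *.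
have -> : 4 * ax * (ax^-1 - (Lf + rho * Lg) / 2 - M / kap - 1 / (2 * (ax / (1 - ax * Ltheta))))
    = 2 + 2 * (ax * Ltheta) - 2 * (ax * (Lf + rho * Lg)) - 4 * (ax * (M / kap)).
  by field; rewrite kap_neq0 axL_neq0 ax_neq0.
lra.
Qed.

Lemma pgmad_step_sizes {ax ay} :
  0 < ay < 1 / (Lf + 2 * rho * Lg + tau) -> 0 < ax < 1 / Ltheta ->
  [/\ ay * (Lf + 2 * rho * Lg + tau) <= 1, kap * ay <= 1 & ax * Ltheta < 1].
Proof.
move=> /andP[ay_gt0 ay_lt] /andP[ax_gt0 ax_lt].
have b_ge0 := mulr_ge0 rho_ge0 Lg_ge0.
have LP_gt0 : 0 < Lf + 2 * rho * Lg + tau.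
  by have := kap_gt0; have := tau_ge; have := Lf_ge0; lra.
have ayL : ay * (Lf + 2 * rho * Lg + tau) <= 1 by apply/ltW; rewrite -ltr_pdivlMr.
split => //.
  apply: le_trans ayL; rewrite mulrC ler_pM2l //.
  by have := tau_ge; have := Lf_ge0; lra.
have Lth_gt0 : 0 < Ltheta.
  rewrite /Ltheta mulr_gt0 //; first by have := kap_gt0; have := tau_ge; have := Lf_ge0; lra.
  by have := divr_gt0 LP_gt0 kap_gt0; lra.
by rewrite -ltr_pdivlMr.
Qed.

Lemma pgmad_outer_step {ax x x1 z z1 u u1 v v1 y l} : 0 < ax -> ax * Ltheta < 1 ->
  Xs D x -> Ys D z -> Ys D y -> Ls D l ->
  is_proj (Xs D) (x - ax *: grad_fx D x y l) x1 ->
  is_proj (Ys D) (z - (ax * rho) *: g_1 D z l) z1 ->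
  u1 = (1 + ax * tau) *: u - (ax * tau) *: y ->
  v1 = (1 + ax * tau) *: v - (ax * tau) *: l ->
  (1 - ax * Ltheta) / (4 * ax)
    * (sqn (x1 - x) + sqn (z1 - z) + sqn (u1 - u) + sqn (v1 - v))
  <= vartheta D rho tau x z u v - vartheta D rho tau x1 z1 u1 v1
     + 2 * ax * (Lf ^+ 2 + rho ^+ 2 * Lg ^+ 2 + tau ^+ 2) / (kap * (1 - ax * Ltheta))
       * (vartheta D rho tau x z u v - Qfun D rho tau x z u v y l).
Proof.
move=> ax_gt0 axL Xx Yz Yy Ll px pz eu ev.
have axL_gt0 : 0 < 1 - ax * Ltheta by rewrite subr_gt0.
have gam_gt0 : 0 < ax / (1 - ax * Ltheta) by rewrite divr_gt0.
have := vartheta_descent ax_gt0 gam_gt0 Xx Yz Yy Ll px pz eu ev.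
have -> : 2 * (ax / (1 - ax * Ltheta)) * (Lf ^+ 2 + rho ^+ 2 * Lg ^+ 2 + tau ^+ 2) / kap
    = 2 * ax * (Lf ^+ 2 + rho ^+ 2 * Lg ^+ 2 + tau ^+ 2) / (kap * (1 - ax * Ltheta)).
  by field; rewrite !gt_eqF.
apply: le_trans; apply: ler_wpM2r (pgmad_coef_le ax_gt0 axL).
by rewrite !addr_ge0 ?sqn_ge0.
Qed.

Lemma pgmad_iter_descent {ax ay T x z y u lam v yin lin k} :
  0 < ay < 1 / (Lf + 2 * rho * Lg + tau) -> 0 < ax < 1 / Ltheta ->
  Xs D (x k) -> Ys D (z k) -> Ys D (y k) -> Ls D (lam k) ->
  pgmad_iter D rho tau ax ay T x z y u lam v yin lin k ->
  (1 - ax * Ltheta) / (4 * ax) *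
    (sqn (x k.+1 - x k) + sqn (z k.+1 - z k) + sqn (u k.+1 - u k) + sqn (v k.+1 - v k))
  <= vartheta D rho tau (x k) (z k) (u k) (v k)
     - vartheta D rho tau (x k.+1) (z k.+1) (u k.+1) (v k.+1)
     + 2 * ax * (Lf ^+ 2 + rho ^+ 2 * Lg ^+ 2 + tau ^+ 2) / (kap * (1 - ax * Ltheta))
       * (1 - kap * ay) ^+ T * (vartheta D rho tau (x k) (z k) (u k) (v k)
                                - Qfun D rho tau (x k) (z k) (u k) (v k) (y k) (lam k)).
Proof.
move=> ay_bd ax_bd Xx Yz Yy Ll [[yin0 lin0] inner [y1 l1] [px pz] [eu ev]].
have [ayL kay axL] := pgmad_step_sizes ay_bd ax_bd.
have /andP[ay_gt0 _] := ay_bd; have /andP[ax_gt0 _] := ax_bd.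
have Y0 : Ys D (yin k 0%N) by rewrite yin0.
have L0 : Ls D (lin k 0%N) by rewrite lin0.
have [Yy1 Ll1] := is_proj_seq_mem Y0 L0 inner T (leqnn T); rewrite -y1 -l1 in Yy1 Ll1.
have gap : vartheta D rho tau (x k) (z k) (u k) (v k)
             - Qfun D rho tau (x k) (z k) (u k) (v k) (y k.+1) (lam k.+1)
    <= (1 - kap * ay) ^+ T * (vartheta D rho tau (x k) (z k) (u k) (v k)
                              - Qfun D rho tau (x k) (z k) (u k) (v k) (y k) (lam k)).
  rewrite y1 l1 -yin0 -lin0.
  exact (pga_linear_convergence cY cL kap_gt0 (Qfun_sconcave (u k) (v k) Xx Yz)
    (Qfun_smooth (u k) (v k) Xx Yz) ay T (yin k) (lin k) ay_gt0 ayL kay Y0 L0 inner).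
have K_ge0 : 0 <= 2 * ax * (Lf ^+ 2 + rho ^+ 2 * Lg ^+ 2 + tau ^+ 2) / (kap * (1 - ax * Ltheta)).
  rewrite divr_ge0 ?mulr_ge0 ?(ltW ax_gt0) ?(ltW kap_gt0) ?subr_ge0 ?(ltW axL) //.
  by rewrite -exprMn !addr_ge0 ?sqr_ge0.
have := ler_wpM2l K_ge0 gap.
have := pgmad_outer_step ax_gt0 axL Xx Yz Yy1 Ll1 px pz eu ev.
lra.
Qed.

End PGMAD.

Theorem mainTheorem8 (R : realType) (D : pdata R) (Lf Lg rho kappa tau ax ay : R)
  (T K : nat)
  (x : nat -> 'rV[R]_(dx D)) (z y u : nat -> 'rV[R]_(dy D)) (lam v : nat -> 'rV[R]_(dl D))
  (yin : nat -> nat -> 'rV[R]_(dy D)) (lin : nat -> nat -> 'rV[R]_(dl D)) :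
  (* standing assumptions *)
  Xs D !=set0 -> convex_set (Xs D) -> compact (Xs D) ->
  Ys D !=set0 -> convex_set (Ys D) -> compact (Ys D) ->
  Ls D !=set0 -> convex_set (Ls D) -> compact (Ls D) ->
  is_C1_grad (fbar D) (fbar_x D) (fbar_y D) ->
  0 < Lf ->
  (forall x1 x2 y1 y2 l1 l2, Xs D x1 -> Xs D x2 -> Ys D y1 -> Ys D y2 -> Ls D l1 -> Ls D l2 ->
     enorm3 (grad_fx D x1 y1 l1 - grad_fx D x2 y2 l2)
            (grad_fy D x1 y1 l1 - grad_fy D x2 y2 l2)
            (grad_fl D x1 y1 l1 - grad_fl D x2 y2 l2)
     <= Lf * enorm3 (x1 - x2) (y1 - y2) (l1 - l2)) ->
  is_C1_grad (gfun D) (g_1 D) (g_2 D) ->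
  0 <= Lg ->
  (forall y1 y2 l1 l2, Ys D y1 -> Ys D y2 -> Ls D l1 -> Ls D l2 ->
     enorm2 (g_1 D y1 l1 - g_1 D y2 l2) (g_2 D y1 l1 - g_2 D y2 l2)
     <= Lg * enorm2 (y1 - y2) (l1 - l2)) ->
  (forall l, Ls D l -> forall a b (t : R), 0 <= t <= 1 ->
     gfun D (t *: a + (1 - t) *: b) l <= t * gfun D a l + (1 - t) * gfun D b l) ->
  (exists zs ls, Ys D zs /\ Ls D ls /\
     gfun D zs ls = sup [set inf [set gfun D z' l' | z' in Ys D] | l' in Ls D] /\
     gfun D zs ls = inf [set sup [set gfun D z' l' | l' in Ls D] | z' in Ys D]) ->
  (* parameters *)
  let LP := Lf + 2 * rho * Lg in
  let Ltheta := (Lf + rho * Lg + 2 * tau) * (1 + (LP + tau) / kappa) in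
  0 < rho -> 0 < kappa -> LP + kappa <= tau ->
  0 < ay < 1 / (LP + tau) -> 0 < ax < 1 / Ltheta ->
  (1 < T)%N -> (1 < K)%N ->
  (* PG-MAD iterates *)
  Xs D (x 0%N) -> Ys D (z 0%N) -> Ys D (y 0%N) -> Ls D (lam 0%N) ->
  (forall k, (k < K)%N ->
     [/\ yin k 0%N = y k /\ lin k 0%N = lam k,
      (forall t, (t < T)%N ->
         is_proj (Ys D) (yin k t + ay *: grad_Qy D rho tau (x k) (z k) (u k) (v k) (yin k t) (lin k t))
                 (yin k t.+1) /\
         is_proj (Ls D) (lin k t + ay *: grad_Ql D rho tau (x k) (z k) (u k) (v k) (yin k t) (lin k t))
                 (lin k t.+1)),
      y k.+1 = yin k T /\ lam k.+1 = lin k T,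
      is_proj (Xs D) (x k - ax *: grad_fx D (x k) (y k.+1) (lam k.+1)) (x k.+1) /\
      is_proj (Ys D) (z k - (ax * rho) *: g_1 D (z k) (lam k.+1)) (z k.+1) &
      u k.+1 = (1 + ax * tau) *: u k - (ax * tau) *: y k.+1 /\
      v k.+1 = (1 + ax * tau) *: v k - (ax * tau) *: lam k.+1]) ->
  forall k, (k < K)%N ->
    let Delta := vartheta D rho tau (x k) (z k) (u k) (v k)
                 - Qfun D rho tau (x k) (z k) (u k) (v k) (y k) (lam k) in
    (1 - ax * Ltheta) / (4 * ax) *
      (sqn (x k.+1 - x k) + sqn (z k.+1 - z k) + sqn (u k.+1 - u k) + sqn (v k.+1 - v k))
    <= vartheta D rho tau (x k) (z k) (u k) (v k)
       - vartheta D rho tau (x k.+1) (z k.+1) (u k.+1) (v k.+1)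
       + 2 * ax * (Lf ^+ 2 + rho ^+ 2 * Lg ^+ 2 + tau ^+ 2) / (kappa * (1 - ax * Ltheta))
         * (1 - kappa * ay) ^+ T * Delta.
Proof.
move=> _ cX _ _ cY _ _ cL _ hf Lf_gt0 hLf hg Lg_ge0 hLg _ _ LP Lth rho_gt0 kap_gt0 tau_ge.
move=> ay_bd ax_bd _ _ X0 Z0 Y0 L0 iter k kK.
have [Xk Zk Yk Lk] := pgmad_feasible X0 Z0 Y0 L0 iter k (ltnW kK).
exact (pgmad_iter_descent _ _ _ _ _ _ hf hg hLf hLg (ltW Lf_gt0) Lg_ge0 (ltW rho_gt0) kap_gt0
  cX cY cL tau_ge ay_bd ax_bd Xk Zk Yk Lk (iter k kK)).
Qed.
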